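(* Let $R$ be a GCD-domain and let $a\in R$ be a non-zero element with $a\notin R^{\ast}$. Then the following conditions on $a$ are all equivalent: (ii) there exist $n\geqslant 0$ and $s_0,s_1,\dots,s_n\in\operatorname{Sqf} R$ such that $a=s_n^{2^n}s_{n-1}^{2^{n-1}}\cdots s_1^2s_0$; (iii) there exist $n\geqslant 1$, $s_1,\dots,s_n\in(\operatorname{Sqf} R)\setminus R^{\ast}$, integers $0\leqslant k_1<k_2<\dots<k_n$, and $c\in R^{\ast}$ such that $a=c\,s_n^{2^{k_n}}s_{n-1}^{2^{k_{n-1}}}\cdots s_1^{2^{k_1}}$; (iv) there exist $n\geqslant 1$ and $s_1,\dots,s_n\in\operatorname{Sqf} R$ such that $s_i\mid s_{i+1}$ for $i=1,\dots,n-1$ and $a=s_1s_2\cdots s_n$; (v) there exist $n\geqslant 1$, $s_1,\dots,s_n\in(\operatorname{Sqf} R)\setminus R^{\ast}$, integers $k_1,\dots,k_n\geqslant 1$, and $c\in R^{\ast}$ such that $s_i\mid s_{i+1}$ and $s_i\not\sim s_{i+1}$ for $i=1,\dots,n-1$, and $a=c\,s_1^{k_1}s_2^{k_2}\cdots s_n^{k_n}$; (vi) there exist $n\geqslant 1$ and $s_1,\dots,s_n\in\operatorname{Sqf} R$ such that $s_i$ and $s_j$ are relatively prime for $i\neq j$, and $a=s_1s_2^2s_3^3\cdots s_n^n$; (vii) there exist $n\geqslant 1$, $s_1,\dots,s_n\in(\operatorname{Sqf} R)\setminus R^{\ast}$, integers $1\leqslant k_1<k_2<\dots<k_n$, and $c\in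 R^{\ast}$ such that $s_i$ and $s_j$ are relatively prime for $i\neq j$, and $a=c\,s_1^{k_1}s_2^{k_2}\cdots s_n^{k_n}$.
   Context: A domain is a commutative ring with identity without zero divisors. A GCD-domain is a domain in which the intersection of any two principal ideals is principal. $R^{\ast}$ denotes the set of invertible elements of $R$. For $a,b\in R$, $a\sim b$ means $a$ and $b$ are associated, and $a\mid b$ means $a$ divides $b$. Elements $a,b$ are relatively prime if they have no common non-invertible divisor. An element $a\in R$ is square-free if it cannot be written as $a=b^2c$ with $b\in R\setminus R^{\ast}$ and $c\in R$; $\operatorname{Sqf} R$ denotes the set of square-free elements of $R$. *)

From HB Require Import structures.
From mathcomp Require Import all_boot all_order all_algebra.
Set Implicit Arguments. Unset Strict Implicit. Unset Printing Implicit Defensive.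
Import Order.TTheory GRing.Theory.
Local Open Scope ring_scope.

Definition dvdR (R : comPzRingType) (a b : R) : Prop := exists c : R, b = c * a.

Definition assocR (R : comPzRingType) (a b : R) : Prop := dvdR a b /\ dvdR b a.

(* GCD-domain: the intersection of any two principal ideals aR, bR is principal
   (equal to mR for some m). x \in aR iff a | x. *)
Definition gcd_domain (R : idomainType) : Prop :=
  forall a b : R, exists m : R, forall x : R, (dvdR a x /\ dvdR b x) <-> dvdR m x.

Definition rel_primeR (R : idomainType) (a b : R) : Prop :=
  forall d : R, dvdR d a -> dvdR d b -> d \is a GRing.unit.

Definition sqfR (R : idomainType) (a : R) : Prop :=
  ~ (exists b c : R, ~~ (b \is a GRing.unit) /\ a = b ^+ 2 * c).

Section Conds.
Variables (R : idomainType) (a : R).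

Definition cond_ii : Prop :=
  exists (n : nat) (s : nat -> R),
    (forall i, (i <= n)%N -> sqfR (s i)) /\
    a = \prod_(i < n.+1) s i ^+ (2 ^ i).

Definition cond_iii : Prop :=
  exists (n : nat) (s : nat -> R) (k : nat -> nat) (c : R),
    (1 <= n)%N /\
    (forall i, (1 <= i <= n)%N -> sqfR (s i) /\ ~~ (s i \is a GRing.unit)) /\
    (forall i, (1 <= i < n)%N -> (k i < k i.+1)%N) /\
    c \is a GRing.unit /\
    a = c * \prod_(1 <= i < n.+1) s i ^+ (2 ^ k i).

Definition cond_iv : Prop :=
  exists (n : nat) (s : nat -> R),
    (1 <= n)%N /\
    (forall i, (1 <= i <= n)%N -> sqfR (s i)) /\
    (forall i, (1 <= i < n)%N -> dvdR (s i) (s i.+1)) /\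
    a = \prod_(1 <= i < n.+1) s i.

Definition cond_v : Prop :=
  exists (n : nat) (s : nat -> R) (k : nat -> nat) (c : R),
    (1 <= n)%N /\
    (forall i, (1 <= i <= n)%N -> sqfR (s i) /\ ~~ (s i \is a GRing.unit)) /\
    (forall i, (1 <= i <= n)%N -> (1 <= k i)%N) /\
    c \is a GRing.unit /\
    (forall i, (1 <= i < n)%N -> dvdR (s i) (s i.+1) /\ ~ assocR (s i) (s i.+1)) /\
    a = c * \prod_(1 <= i < n.+1) s i ^+ k i.

Definition cond_vi : Prop :=
  exists (n : nat) (s : nat -> R),
    (1 <= n)%N /\
    (forall i, (1 <= i <= n)%N -> sqfR (s i)) /\
    (forall i j, (1 <= i <= n)%N -> (1 <= j <= n)%N -> i <> j ->
       rel_primeR (s i) (s j)) /\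
    a = \prod_(1 <= i < n.+1) s i ^+ i.

Definition cond_vii : Prop :=
  exists (n : nat) (s : nat -> R) (k : nat -> nat) (c : R),
    (1 <= n)%N /\
    (forall i, (1 <= i <= n)%N -> sqfR (s i) /\ ~~ (s i \is a GRing.unit)) /\
    (1 <= k 1)%N /\
    (forall i, (1 <= i < n)%N -> (k i < k i.+1)%N) /\
    c \is a GRing.unit /\
    (forall i j, (1 <= i <= n)%N -> (1 <= j <= n)%N -> i <> j ->
       rel_primeR (s i) (s j)) /\
    a = c * \prod_(1 <= i < n.+1) s i ^+ k i.

End Conds.

From HB Require Import structures.
From mathcomp Require Import all_boot all_order all_algebra.
From mathcomp Require Import ring zify.
Import GRing.Theory.
Local Open Scope ring_scope.
Set Implicit Arguments. Unset Strict Implicit. Unset Printing Implicit Defensive.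

(* Each condition says that a has a factorization t_1 ^+ e_1 * ... * t_m ^+ e_m into
   pairwise relatively prime square-free factors t_j.  Such a factorization regroups by
   exponent into (vi), by the binary digits of the exponents into (ii), and, through the
   tails u_j = \prod_(e_i >= j) t_i, into the divisor chain of (v); dropping units gives
   (iii) and (vii), and repeating factors gives (iv).  Conversely, (iii) yields one by
   induction because s * b ^+ 2 has one whenever s is square-free and b has one: with
   g = gcd(s, t), s = s' g and t = t' g, we have s t^(2e) = g^(2e+1) t'^(2e) s'.  A chain
   s_1 | ... | s_n yields one by dividing every s_i by s_1, which is coprime to s_n / s_1
   because s_n is square-free.  The GCD hypothesis supplies the gcds above and Gauss's lemma,
   by which products of pairwise relatively prime square-free elements are square-free. *)

Section Divisibility.
Variable R : idomainType.
Implicit Types a b c d s t u x y z : R.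

Lemma dvdR_refl x : dvdR x x.
Proof. by exists 1; rewrite mul1r. Qed.

Lemma dvdR_trans y x z : dvdR x y -> dvdR y z -> dvdR x z.
Proof. by move=> [c ->] [e ->]; exists (e * c); rewrite mulrA. Qed.

Lemma dvdR_mulr x y z : dvdR x y -> dvdR x (y * z).
Proof. by move=> [c ->]; exists (z * c); rewrite mulrC mulrA. Qed.

Lemma dvdR_mul a b c d : dvdR a b -> dvdR c d -> dvdR (a * c) (b * d).
Proof. by move=> [e ->] [f ->]; exists (e * f); rewrite mulrACA. Qed.

Lemma dvdR_factl x y : dvdR x (x * y).
Proof. by exists y; rewrite mulrC. Qed.

Lemma dvdR_factr x y : dvdR y (x * y).
Proof. by exists x. Qed.

Lemma dvdR0 x : dvdR x 0.
Proof. by exists 0; rewrite mul0r. Qed.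

Lemma unit_dvdR u x : u \is a GRing.unit -> dvdR u x.
Proof. by move=> Uu; exists (x / u); rewrite divrK. Qed.

Lemma dvdR_unit d u : u \is a GRing.unit -> dvdR d u -> d \is a GRing.unit.
Proof. by move=> Uu [c Dc]; move: Uu; rewrite Dc unitrM => /andP[]. Qed.

Lemma dvdR_mul2r c x y : c != 0 -> dvdR (x * c) (y * c) -> dvdR x y.
Proof. by move=> c0 [e De]; exists e; apply: (mulIf c0); rewrite De mulrA. Qed.

Lemma dvdR_neq0 d x : x != 0 -> dvdR d x -> d != 0.
Proof. by move=> x0 [c Dx]; apply: contraNneq x0 => d0; rewrite Dx d0 mulr0. Qed.

Lemma rel_primeR_sym x y : rel_primeR x y -> rel_primeR y x.
Proof. by move=> cop d dy dx; apply: cop. Qed.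

Lemma rel_primeR_dvd x y x' y' :
  dvdR x' x -> dvdR y' y -> rel_primeR x y -> rel_primeR x' y'.
Proof.
by move=> x'x y'y cop d dx dy; apply: cop; [apply: dvdR_trans x'x | apply: dvdR_trans y'y].
Qed.

Lemma rel_primeR_unit u y : u \is a GRing.unit -> rel_primeR u y.
Proof. by move=> Uu d du _; apply: dvdR_unit du. Qed.

Lemma sqfRP s : sqfR s <-> (forall b, dvdR (b * b) s -> b \is a GRing.unit).
Proof.
split=> [sqf_s b [c Ds] | sqf_s [b [c [Nb Ds]]]].
  by apply/negPn/negP => Nb; apply: sqf_s; exists b, c; rewrite Ds expr2 mulrC.
by move/negP: Nb; apply; apply: sqf_s; exists c; rewrite Ds expr2 mulrC.
Qed.

Lemma sqfR_neq0 s : sqfR s -> s != 0.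
Proof.
by move/sqfRP=> sqf_s; apply/eqP=> s0; have := sqf_s 0; rewrite s0 unitr0 => /(_ (dvdR0 _)).
Qed.

Lemma sqfR_dvd s t : dvdR t s -> sqfR s -> sqfR t.
Proof. by move=> ts /sqfRP sqf_s; apply/sqfRP=> b bt; apply/sqf_s/(dvdR_trans bt). Qed.

Lemma sqfR_unit u : u \is a GRing.unit -> sqfR u.
Proof. by move=> Uu; apply/sqfRP=> b /(dvdR_unit Uu); rewrite unitrM => /andP[]. Qed.

Lemma sqfR_mul_rel_prime x y : sqfR (x * y) -> rel_primeR x y.
Proof. by move=> /sqfRP sqf_xy d dx dy; apply/sqf_xy/dvdR_mul. Qed.

End Divisibility.

Section GcdDomain.
Variable R : idomainType.
Hypothesis gcdR : gcd_domain R.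
Implicit Types a b c d s t u x y z : R.

(* With m a generator of xR \cap yR, the cofactor e in x y = e m is a gcd of x and y. *)
Lemma lcm_cofactor x y : x != 0 -> y != 0 ->
  exists m e, [/\ forall w, dvdR x w /\ dvdR y w <-> dvdR m w,
                  x * y = e * m, dvdR e x & dvdR e y].
Proof.
move=> x0 y0; have [m Dm] := gcdR x y.
have [[p Dmx] [q Dmy]] : dvdR x m /\ dvdR y m by apply/Dm; apply: dvdR_refl.
have [e De] : dvdR m (x * y) by apply/Dm; split; [apply: dvdR_factl | apply: dvdR_factr].
exists m, e; split=> //.
  by exists q; apply: (mulIf y0); rewrite De Dmy mulrA [e * q]mulrC.
by exists p; apply: (mulIf x0); rewrite mulrC De Dmx mulrA [e * p]mulrC.
Qed.

Lemma Gauss_dvdR x y z : rel_primeR x y -> dvdR x (y * z) -> dvdR x z.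
Proof.
have [-> | x0] := eqVneq x 0 => cop_xy x_yz.
  have Uy : y \is a GRing.unit by apply: cop_xy; [apply: dvdR0 | apply: dvdR_refl].
  by case: x_yz => c Dyz; rewrite -[z](mulKr Uy) Dyz !mulr0; apply: dvdR0.
have [y0 | y0] := eqVneq y 0.
  by apply/unit_dvdR/cop_xy; rewrite ?y0; [apply: dvdR_refl | apply: dvdR0].
have [m [e [Dm Dxy ex ey]]] := lcm_cofactor x0 y0.
have Ue : e \is a GRing.unit by apply: cop_xy.
have [f Dyz] : dvdR m (y * z) by apply/Dm; split=> //; apply: dvdR_factl.
have m0 : m != 0 by apply: contraNneq (mulf_neq0 x0 y0) => m0; rewrite Dxy m0 mulr0.
have Dez : e * z = f * x.
  by apply: (mulIf m0); rewrite mulrAC -Dxy -mulrA Dyz mulrCA mulrA.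
by exists (e^-1 * f); rewrite -mulrA -Dez mulKr.
Qed.

Lemma gcdR_exists x y : x != 0 -> y != 0 ->
  exists g, [/\ dvdR g x, dvdR g y & forall d, dvdR d x -> dvdR d y -> dvdR d g].
Proof.
move=> x0 y0; have [m [g [Dm Dxy gx gy]]] := lcm_cofactor x0 y0.
have m0 : m != 0 by apply: contraNneq (mulf_neq0 x0 y0) => m0; rewrite Dxy m0 mulr0.
exists g; split=> // d [x' Dx] [y' Dy].
have [f Dd] : dvdR m (x' * y' * d).
  by apply/Dm; split; [exists y'; rewrite Dx | exists x'; rewrite Dy]; ring.
exists f; apply: (mulIf m0).
transitivity (x' * y' * d * d); first by rewrite -Dxy Dx Dy; ring.
by rewrite Dd; ring.
Qed.

Lemma rel_primeR_mulr x y z : rel_primeR x y -> rel_primeR x z -> rel_primeR x (y * z).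
Proof.
move=> cop_xy cop_xz d dx d_yz; apply: (cop_xz d dx).
by apply: Gauss_dvdR d_yz; apply: rel_primeR_dvd dx (dvdR_refl y) cop_xy.
Qed.

Lemma rel_primeR_mull x y z : rel_primeR x z -> rel_primeR y z -> rel_primeR (x * y) z.
Proof.
by move=> /rel_primeR_sym cop_xz /rel_primeR_sym cop_yz; apply/rel_primeR_sym/rel_primeR_mulr.
Qed.

Lemma rel_primeR_prodl (I : Type) (r : seq I) (P : pred I) (F : I -> R) y :
  (forall i, P i -> rel_primeR (F i) y) -> rel_primeR (\prod_(i <- r | P i) F i) y.
Proof.
move=> cop_Fy; apply: (big_ind (fun v => rel_primeR v y)) => //.
- by apply: rel_primeR_unit; rewrite unitr1.
- by move=> v w; apply: rel_primeR_mull.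
Qed.

Lemma rel_primeR_prodr (I : Type) (r : seq I) (P : pred I) (F : I -> R) y :
  (forall i, P i -> rel_primeR y (F i)) -> rel_primeR y (\prod_(i <- r | P i) F i).
Proof. by move=> cop_yF; apply/rel_primeR_sym/rel_primeR_prodl => i /cop_yF/rel_primeR_sym. Qed.

(* A common divisor d of b and x is coprime to y, so d * d | x y forces d * d | x. *)
Lemma sqfR_mul_sq_rel_prime x y b :
  sqfR x -> rel_primeR x y -> dvdR (b * b) (x * y) -> rel_primeR b x.
Proof.
move=> sqf_x cop_xy bb_xy d db [x' Dx].
have d0 : d != 0 by apply: dvdR_neq0 (sqfR_neq0 sqf_x) _; rewrite Dx; apply: dvdR_factr.
have d_x'y : dvdR d (x' * y).
  apply: (dvdR_mul2r d0); rewrite mulrAC -Dx.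
  by apply: dvdR_trans bb_xy; apply: (dvdR_mul db db).
have cop_dy : rel_primeR d y.
  by apply: rel_primeR_dvd cop_xy; [rewrite Dx; apply: dvdR_factr | apply: dvdR_refl].
move/sqfRP: sqf_x; apply; rewrite Dx; apply: dvdR_mul (dvdR_refl d).
by apply: Gauss_dvdR cop_dy _; rewrite mulrC.
Qed.

Lemma sqfR_mul x y : sqfR x -> sqfR y -> rel_primeR x y -> sqfR (x * y).
Proof.
move=> sqf_x sqf_y cop_xy; apply/sqfRP=> b bb_xy.
have cop_bx := sqfR_mul_sq_rel_prime sqf_x cop_xy bb_xy.
have cop_by : rel_primeR b y.
  by apply: sqfR_mul_sq_rel_prime sqf_y (rel_primeR_sym cop_xy) _; rewrite [y * x]mulrC.
apply: cop_by (dvdR_refl b) _; apply: Gauss_dvdR cop_bx _.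
by apply: dvdR_trans bb_xy; apply: dvdR_factl.
Qed.

End GcdDomain.

Section CoprimeFamilies.
Variables (R : idomainType) (I : eqType) (F : I -> R).
Implicit Type r : seq I.

Fixpoint pairwise_coprime r : Prop :=
  if r is i :: r' then (forall j, j \in r' -> rel_primeR (F i) (F j)) /\ pairwise_coprime r'
  else True.

Lemma pairwise_coprime_filter (P : pred I) r :
  pairwise_coprime r -> pairwise_coprime (filter P r).
Proof.
elim: r => //= i r IHr [cop_i cop_r]; case: (P i) => /=; last exact: IHr.
by split; [move=> j; rewrite mem_filter => /andP[_ /cop_i] | apply: IHr].
Qed.

Lemma pairwise_coprime_mem r i j : pairwise_coprime r ->
  i \in r -> j \in r -> i != j -> rel_primeR (F i) (F j).
Proof.
elim: r => //= k r IHr [cop_k cop_r].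
rewrite !inE => /predU1P[-> | ir] /predU1P[-> | jr]; rewrite ?eqxx // => neq_ij.
- exact: cop_k.
- exact/rel_primeR_sym/cop_k.
- exact: IHr neq_ij.
Qed.

Lemma uniq_pairwise_coprime r : uniq r ->
  (forall i j, i \in r -> j \in r -> i != j -> rel_primeR (F i) (F j)) ->
  pairwise_coprime r.
Proof.
elim: r => //= i r IHr /andP[ir uniq_r] cop_r; split=> [j jr | ].
  by apply: cop_r; rewrite ?inE ?eqxx ?jr ?orbT //; apply: contraNneq ir => ->.
by apply: IHr => // j k jr kr; apply: cop_r; rewrite inE ?jr ?kr orbT.
Qed.

Lemma sqfR_prod_coprime (P : pred I) r : gcd_domain R -> pairwise_coprime r ->
  (forall i, i \in r -> sqfR (F i)) -> sqfR (\prod_(i <- r | P i) F i).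
Proof.
move=> gcdR /(pairwise_coprime_filter P) + sqf_r; rewrite -big_filter.
have {sqf_r} : {in filter P r, forall i, sqfR (F i)}.
  by move=> i; rewrite mem_filter => /andP[_ /sqf_r].
elim: (filter P r) => [_ _ | i r' IHr sqf_ir' [cop_i cop_r']].
  by rewrite big_nil; apply: sqfR_unit; rewrite unitr1.
rewrite big_cons; apply: sqfR_mul => //; first by apply: sqf_ir'; rewrite mem_head.
  by apply: IHr => // j jr'; apply: sqf_ir'; rewrite inE jr' orbT.
by rewrite big_seq; apply: rel_primeR_prodr.
Qed.

End CoprimeFamilies.

Lemma exchange_prod_filter_exp (R : comPzSemiRingType) (I J : Type)
    (rI : seq I) (rJ : seq J) (P : J -> pred I) (f : I -> R) (w : J -> nat) :
  \prod_(j <- rJ) (\prod_(i <- rI | P j i) f i) ^+ w j =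
  \prod_(i <- rI) f i ^+ (\sum_(j <- rJ | P j i) w j).
Proof.
transitivity (\prod_(j <- rJ) \prod_(i <- rI) (if P j i then f i ^+ w j else 1)).
  by apply: eq_bigr => j _; rewrite -prodrXl big_mkcond.
by rewrite exchange_big; apply: eq_bigr => i _; rewrite -prodrXr [RHS]big_mkcond.
Qed.

Lemma sum_binary_digits N e : (e < 2 ^ N)%N ->
  (\sum_(k < N | odd (e %/ 2 ^ k)) 2 ^ k)%N = e.
Proof.
rewrite big_mkcond /=; elim: N e => [|N IHN] e lt_e.
  by move: lt_e; rewrite big_ord0 expn0 ltnS leqn0 => /eqP->.
rewrite big_ord_recl /= expn0 divn1.
have -> : (\sum_(i < N) (if odd (e %/ 2 ^ bump 0 i) then 2 ^ bump 0 i else 0) =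
           2 * \sum_(i < N) (if odd (e %/ 2 %/ 2 ^ i) then 2 ^ i else 0))%N.
  rewrite big_distrr; apply: eq_bigr => i _.
  by rewrite /bump /= add1n expnS divnMA; case: ifP; rewrite ?muln0.
rewrite IHN; last by rewrite ltn_divLR // -expnSr.
by rewrite divn2 mul2n -[RHS]odd_double_half; case: (odd e).
Qed.

Lemma prod_tails_telescope (R : comPzSemiRingType) (s : nat -> R) (f : nat -> nat) n :
  (forall i, (i < n)%N -> (f i <= f i.+1)%N) ->
  \prod_(1 <= j < n.+1) (\prod_(j <= i < n.+1) s i) ^+ (f j - f j.-1) =
  \prod_(1 <= i < n.+1) s i ^+ (f i - f 0%N).
Proof.
move=> f_mono.
rewrite (eq_big_nat _ _ (F2 := fun j => (\prod_(1 <= i < n.+1 | j <= i) s i) ^+ (f j - f j.-1))%N);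
  last by move=> j /andP[j1 _]; rewrite (big_nat_widenl _ _ _ _ _ j1).
rewrite exchange_prod_filter_exp big_seq [RHS]big_seq.
apply: eq_bigr => i; rewrite mem_index_iota ltnS => /andP[_ le_in].
have -> : (\sum_(1 <= j < n.+1 | j <= i) (f j - f j.-1) = \sum_(1 <= j < i.+1) (f j - f j.-1))%N.
  by rewrite [RHS](big_nat_widen _ _ n.+1) //; apply: eq_bigl => j; rewrite ltnS.
rewrite big_add1 /= telescope_sumn_in // => j /andP[_ lt_ji].
by apply: f_mono; apply: leq_trans le_in.
Qed.

Section Chains.
Variables (T : eqType) (e : T -> T -> Prop).

(* The Prop-valued analogue of [path e x p], for relations such as [dvdR] that are not boolean. *)
Fixpoint chain x (p : seq T) : Prop :=
  if p is y :: p' then e x y /\ chain y p' else True.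

Lemma chain_nth x0 x p i :
  chain x p -> (i < size p)%N -> e (nth x0 (x :: p) i) (nth x0 p i).
Proof. by elim: p x i => //= y p IHp x [|i] [exy /IHp chain_yp] //= /chain_yp. Qed.

Lemma chain_iota (f : nat -> T) m n :
  (forall i, (m <= i < m + n)%N -> e (f i) (f i.+1)) -> chain (f m) (map f (iota m.+1 n)).
Proof.
elim: n m => //= n IHn m e_f; split; first by apply: e_f; rewrite leqnn addnS ltnS leq_addr.
by apply: IHn => i /andP[le_mi lt_i]; apply: e_f; rewrite addnS -addSn lt_i ltnW.
Qed.

Hypothesis e_trans : forall y x z, e x y -> e y z -> e x z.

Lemma chain_trans x y p : e x y -> chain y p -> chain x p.
Proof. by case: p => //= z p exy [eyz chain_zp]; split=> //; apply: e_trans eyz. Qed.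

Lemma chain_mem x p : chain x p -> forall y, y \in p -> e x y.
Proof.
elim: p x => //= z p IHp x [exz chain_zp] y; rewrite inE => /predU1P[-> // | yp].
exact: e_trans exz (IHp _ chain_zp y yp).
Qed.

Hypothesis e_refl : forall x, e x x.

Lemma chain_flatten_nseq x (L : seq (T * nat)) :
  chain x (map fst L) -> chain x (flatten [seq nseq y.2 y.1 | y <- L]).
Proof.
elim: L x => //= [[y k]] L IHL x /= [exy /IHL chain_y].
case: k => [|k] /=; first exact: chain_trans exy chain_y.
by split=> //; elim: k => //= k IHk; split=> //; apply: e_refl.
Qed.

End Chains.

Section SqfFactorization.
Variable R : idomainType.
Implicit Types (a b c s t : R) (L : seq (R * nat)).

Definition sqf_factorization a : Prop :=
  exists L, [/\ pairwise_coprime fst L, {in L, forall x, sqfR x.1}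
              & a = \prod_(x <- L) x.1 ^+ x.2].

Lemma sqf_factorization_sqf s : sqfR s -> sqf_factorization s.
Proof.
by move=> sqf_s; exists [:: (s, 1%N)]; split=> [//|x|]; rewrite ?inE ?big_seq1 // => /eqP->.
Qed.

Lemma sqf_factorization_unit_mul c b :
  c \is a GRing.unit -> sqf_factorization b -> sqf_factorization (c * b).
Proof.
move=> Uc [L [cop_L sqf_L ->]]; exists ((c, 1%N) :: L); split=> /=.
- by split=> // y _; apply: rel_primeR_unit.
- by move=> x; rewrite inE => /predU1P[-> | /sqf_L //]; apply: sqfR_unit.
- by rewrite big_cons expr1.
Qed.

Lemma sqf_factorization_exp b m : sqf_factorization b -> sqf_factorization (b ^+ m).
Proof.
move=> [L [cop_L sqf_L ->]]; exists [seq (x.1, x.2 * m)%N | x <- L]; split.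
- clear sqf_L; elim: L cop_L => [// | x L IHL [cop_x /IHL cop_L]].
  by split=> // ? /mapP[y yL ->]; apply: cop_x y yL.
- by move=> ? /mapP[x xL ->]; apply: sqf_L x xL.
- by rewrite big_map -prodrXl; apply: eq_bigr => x _; rewrite exprM.
Qed.

Section GcdDomain.
Hypothesis gcdR : gcd_domain R.

(* Induction on L, using s t^(2e) = g^(2e+1) t'^(2e) s' for g = gcd(s, t), s = s' g, t = t' g;
   the divisibility clause is what keeps the new factors pairwise coprime. *)
Lemma sqf_mul_sq_factors s L :
  sqfR s -> pairwise_coprime fst L -> {in L, forall x, sqfR x.1} ->
  exists L', [/\ pairwise_coprime fst L', {in L', forall y, sqfR y.1},
    {in L', forall y, dvdR y.1 s \/ exists2 x, x \in L & dvdR y.1 x.1}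
    & s * \prod_(x <- L) x.1 ^+ (x.2 * 2) = \prod_(y <- L') y.1 ^+ y.2].
Proof.
elim: L s => [|[t e] L IHL] s sqf_s cop_L sqf_L.
  exists [:: (s, 1%N)]; split=> //= [y|y|]; rewrite ?big_nil ?big_seq1 ?mulr1 //.
  - by rewrite inE => /eqP->.
  - by rewrite inE => /eqP->; left; apply: dvdR_refl.
have [/= cop_t cop_L'] := cop_L.
have sqf_t : sqfR t by apply: (sqf_L (t, e)); rewrite mem_head.
have {}sqf_L y : y \in L -> sqfR y.1 by move=> yL; apply: sqf_L; rewrite inE yL orbT.
have [g [[s' Ds] [t' Dt] gcd_g]] := gcdR_exists gcdR (sqfR_neq0 sqf_s) (sqfR_neq0 sqf_t).
have s's : dvdR s' s by rewrite Ds; apply: dvdR_factl.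
have t't : dvdR t' t by rewrite Dt; apply: dvdR_factl.
have gs : dvdR g s by rewrite Ds; apply: dvdR_factr.
have gt : dvdR g t by rewrite Dt; apply: dvdR_factr.
have [L1 [cop_L1 sqf_L1 dvd_L1 DL1]] := IHL s' (sqfR_dvd s's sqf_s) cop_L' sqf_L.
have cop_gs' : rel_primeR g s' by apply/rel_primeR_sym/sqfR_mul_rel_prime; rewrite -Ds.
have cop_gt' : rel_primeR g t' by apply/rel_primeR_sym/sqfR_mul_rel_prime; rewrite -Dt.
have cop_ts' : rel_primeR t s'.
  move=> d dt ds'; move/sqfRP: sqf_s; apply; rewrite Ds; apply: (dvdR_mul ds').
  exact: gcd_g (dvdR_trans ds' s's) dt.
exists [:: (g, (e * 2).+1), (t', (e * 2)%N) & L1]; split.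
- split=> [y|]; [rewrite inE => /predU1P[-> // | yL1] | split=> [y yL1|//]].
    have [ys' | [x xL yx]] := dvd_L1 y yL1.
      exact: rel_primeR_dvd (dvdR_refl g) ys' cop_gs'.
    exact: rel_primeR_dvd gt yx (cop_t x xL).
  have [ys' | [x xL yx]] := dvd_L1 y yL1.
    exact: rel_primeR_dvd t't ys' cop_ts'.
  exact: rel_primeR_dvd t't yx (cop_t x xL).
- move=> y; rewrite !inE => /predU1P[-> | /predU1P[-> | /sqf_L1 //]] /=.
    exact: sqfR_dvd gs sqf_s.
  exact: sqfR_dvd t't sqf_t.
- move=> y; rewrite !inE => /predU1P[-> | /predU1P[-> | yL1]] /=; first by left.
    by right; exists (t, e); rewrite ?mem_head.
  have [ys' | [x xL yx]] := dvd_L1 y yL1; first by left; apply: dvdR_trans ys' s's.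
  by right; exists x; rewrite ?inE ?xL ?orbT.
- rewrite !big_cons /= -DL1 {1}Ds Dt exprMn exprS.
  set X := g ^+ _; set Y := t' ^+ _; set P := \prod_(_ <- _) _; ring.
Qed.

Lemma sqf_factorization_sqf_mul_sq s b :
  sqfR s -> sqf_factorization b -> sqf_factorization (s * b ^+ 2).
Proof.
move=> sqf_s [L [cop_L sqf_L ->]].
have [L' [cop_L' sqf_L' _ DL']] := sqf_mul_sq_factors sqf_s cop_L sqf_L.
exists L'; split=> //; rewrite -DL' -prodrXl.
by congr (_ * _); apply: eq_bigr => x _; rewrite exprM.
Qed.

(* With b the product for the tail and d := x.2 + 1, the product is (x.1 * b ^+ 2) ^+ 2 ^ (x.2 - d),
   because every later exponent exceeds x.2. *)
Lemma sqf_factorization_prod_exp2 x p d :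
  chain (fun y z => (y.2 < z.2)%N) x p -> {in x :: p, forall y, sqfR y.1} -> (d <= x.2)%N ->
  sqf_factorization (\prod_(y <- x :: p) y.1 ^+ (2 ^ (y.2 - d))).
Proof.
elim: p x d => [|y p IHp] x d chain_xp sqf_xp le_dx.
  by rewrite big_seq1; apply/sqf_factorization_exp/sqf_factorization_sqf/sqf_xp/mem_head.
have [lt_xy chain_yp] := chain_xp.
have lt_x z : z \in y :: p -> (x.2 < z.2)%N.
  by apply: (chain_mem _ chain_xp) => u v w; apply: ltn_trans.
have sqf_yp : {in y :: p, forall z, sqfR z.1}.
  by move=> z zp; apply: sqf_xp; rewrite inE zp orbT.
set b := \prod_(z <- y :: p) z.1 ^+ (2 ^ (z.2 - x.2.+1)).
suff -> : \prod_(z <- x :: y :: p) z.1 ^+ (2 ^ (z.2 - d)) = (x.1 * b ^+ 2) ^+ (2 ^ (x.2 - d)).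
  apply/sqf_factorization_exp/sqf_factorization_sqf_mul_sq; first exact/sqf_xp/mem_head.
  exact: IHp.
rewrite big_cons exprMn -exprM -prodrXl; congr (_ * _).
rewrite big_seq [RHS]big_seq; apply: eq_bigr => z zp.
rewrite -exprM -expnS -expnD; congr (_ ^+ (2 ^ _)); have := lt_x z zp; lia.
Qed.

Lemma sqf_factorization_cond_vi a : sqf_factorization a -> cond_vi a.
Proof.
move=> [L [cop_L sqf_L ->]]; set n := \max_(x <- L) x.2.
have le_n x : x \in L -> (x.2 <= n)%N by move=> xL; apply: leq_bigmax_seq.
exists n.+1, (fun i => \prod_(x <- L | i == x.2) x.1); split=> //; split; [|split].
- by move=> i _; apply: sqfR_prod_coprime.
- move=> i j _ _ /eqP neq_ij; rewrite big_seq_cond.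
  apply: (rel_primeR_prodl gcdR) => x /andP[xL /eqP Di].
  rewrite big_seq_cond; apply: (rel_primeR_prodr gcdR) => y /andP[yL /eqP Dj].
  by apply: (pairwise_coprime_mem cop_L) => //; apply: contraNneq neq_ij => Dy; rewrite Di Dj Dy.
- symmetry; rewrite exchange_prod_filter_exp; apply: eq_big_seq => x xL.
  rewrite big_nat1_eq; case: ifP => // /negbT.
  by rewrite ltnS (leq_trans (le_n x xL)) // andbT lt0n negbK => /eqP->.
Qed.

Lemma sqf_factorization_cond_ii a : sqf_factorization a -> cond_ii a.
Proof.
move=> [L [cop_L sqf_L ->]]; set n := \max_(x <- L) x.2.
exists n, (fun k => \prod_(x <- L | odd (x.2 %/ 2 ^ k)) x.1); split.
  by move=> k _; apply: sqfR_prod_coprime.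
symmetry; rewrite exchange_prod_filter_exp; apply: eq_big_seq => x xL.
rewrite sum_binary_digits //; apply: leq_ltn_trans (ltnW (ltn_expl _ _)) => //.
exact: leq_bigmax_seq.
Qed.

End GcdDomain.
End SqfFactorization.

Section Conditions.
Variable R : idomainType.

Lemma prod_drop_units (F : nat -> R) (P : pred nat) (r : seq nat) :
  sorted ltn r -> (forall i, i \in r -> ~~ P i -> F i \is a GRing.unit) ->
  ~~ (\prod_(i <- r) F i \is a GRing.unit) ->
  exists (m : nat) (k : nat -> nat) (c : R),
   [/\ (0 < m)%N, c \is a GRing.unit,
       (forall j, (1 <= j <= m)%N -> k j \in r /\ P (k j)),
       (forall i j, (1 <= i)%N -> (i < j <= m)%N -> (k i < k j)%N) &
       \prod_(i <- r) F i = c * \prod_(1 <= j < m.+1) F (k j)].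
Proof.
move=> sorted_r unit_F nunit_prod; set r' := filter P r.
have sorted_r' : sorted ltn r' by apply: sorted_filter => //; apply: ltn_trans.
have Uc : \prod_(i <- r | ~~ P i) F i \is a GRing.unit.
  by apply: unitr_prod_in => i ir; apply: unit_F.
have DF : \prod_(i <- r) F i =
    \prod_(i <- r | ~~ P i) F i * \prod_(1 <= j < (size r').+1) F (nth 0%N r' j.-1).
  by rewrite (bigID P) mulrC -big_filter (big_nth 0%N) big_add1.
exists (size r'), (fun j => nth 0%N r' j.-1), (\prod_(i <- r | ~~ P i) F i); split=> //.
- rewrite lt0n; apply: contraNneq nunit_prod => r'0.
  by rewrite DF r'0 big_geq // mulr1.
- move=> j /andP[j1 jr']; have : nth 0%N r' j.-1 \in r' by rewrite mem_nth // prednK.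
  by rewrite mem_filter => /andP[-> ->].
- by move=> i j i1 /andP[lt_ij jr']; apply: (sorted_ltn_nth ltn_trans) => //; rewrite ?inE /=; lia.
Qed.

Implicit Type a : R.

Lemma cond_ii_iii a : ~~ (a \is a GRing.unit) -> cond_ii a -> cond_iii a.
Proof.
move=> nunit_a [n [s [sqf_s Da]]].
rewrite -(big_mkord xpredT (fun i => s i ^+ (2 ^ i))) in Da.
have [i _ /negPn Us | | m [k [c [m0 Uc Dk lt_k DF]]]] :=
  prod_drop_units (F := fun i => s i ^+ (2 ^ i)) (P := fun i => ~~ (s i \is a GRing.unit))
    (r := index_iota 0 n.+1) (iota_ltn_sorted 0 n.+1);
  [by rewrite unitrX | by rewrite -Da |].
exists m, (fun j => s (k j)), k, c; split=> //; split; [|split; [|split=> //]].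
- move=> j /Dk[]; rewrite mem_index_iota ltnS => /andP[_ le_kn] nunit_s.
  by split=> //; apply: sqf_s.
- by move=> j /andP[j1 lt_jm]; apply: lt_k; rewrite ?ltnSn.
- by rewrite Da DF.
Qed.

Lemma cond_vi_vii a : ~~ (a \is a GRing.unit) -> cond_vi a -> cond_vii a.
Proof.
move=> nunit_a [n [s [n1 [sqf_s [cop_s Da]]]]].
have [i _ /negPn Us | | m [k [c [m0 Uc Dk lt_k DF]]]] :=
  prod_drop_units (F := fun i => s i ^+ i) (P := fun i => ~~ (s i \is a GRing.unit))
    (r := index_iota 1 n.+1) (iota_ltn_sorted 1 (n.+1 - 1));
  [by rewrite unitrX | by rewrite -Da |].
have k_in j : (1 <= j <= m)%N -> (1 <= k j <= n)%N.
  by case/Dk; rewrite mem_index_iota ltnS.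
exists m, (fun j => s (k j)), k, c; split=> //; split; [|split; [|split; [|split=> //; split]]].
- by move=> j jm; split; [apply/sqf_s/k_in | case: (Dk j jm)].
- by case/andP: (k_in 1%N m0).
- by move=> j /andP[j1 lt_jm]; apply: lt_k; rewrite ?ltnSn.
- move=> i j im jm neq_ij; apply: cop_s; rewrite ?k_in // => Dk'; apply: neq_ij.
  move: im jm Dk' => /andP[i1 im] /andP[j1 jm].
  case: (ltngtP i j) => // [lt_ij | lt_ji] Dk'.
    by have := lt_k i j i1; rewrite lt_ij jm Dk' ltnn => /(_ isT).
  by have := lt_k j i j1; rewrite lt_ji im Dk' ltnn => /(_ isT).
- by rewrite Da DF.
Qed.

Implicit Types (x y : R) (p q : seq R).

Lemma chain_dvdR_mul2r x y q : x != 0 ->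
  chain (@dvdR R) (y * x) [seq z * x | z <- q] -> chain (@dvdR R) y q.
Proof.
move=> x0; elim: q y => //= z q IHq y [yz_x /IHq chain_zq].
by split=> //; apply: dvdR_mul2r yz_x.
Qed.

Lemma dvdR_all_map_mulr x p : (forall y, y \in p -> dvdR x y) ->
  exists q, p = [seq z * x | z <- q].
Proof.
elim: p => [|y p IHp] dvd_xp; first by exists [::].
have [z ->] := dvd_xp y (mem_head _ _).
have [q ->] : exists q, p = [seq z * x | z <- q].
  by apply: IHp => w wp; apply: dvd_xp; rewrite inE wp orbT.
by exists (z :: q).
Qed.

Lemma chain_cond_iv x p : chain (@dvdR R) x p -> {in x :: p, forall y, sqfR y} ->
  cond_iv (\prod_(y <- x :: p) y).
Proof.
move=> chain_xp sqf_xp; exists (size p).+1, (fun i => nth 0 (x :: p) i.-1).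
split=> //; split; [|split].
- by move=> i /andP[i1 ip]; apply/sqf_xp/mem_nth; rewrite prednK.
- by move=> [//|i] /andP[_ ip]; apply: chain_nth.
- by rewrite big_add1 (big_nth 0).
Qed.

Lemma cond_v_iv a : cond_v a -> cond_iv a.
Proof.
move=> [n [s [k [c [n1 [sqf_s [_ [Uc [dvd_s ->]]]]]]]]].
case: n n1 sqf_s dvd_s => // n _ sqf_s dvd_s.
pose L := [seq (s i, k i) | i <- iota 1 n.+1].
have -> : \prod_(1 <= i < n.+2) s i ^+ k i = \prod_(y <- flatten [seq nseq w.2 w.1 | w <- L]) y.
  rewrite big_flatten !big_map /index_iota subSS subn0.
  by apply: eq_bigr => i _; rewrite big_nseq iter_mulr_1.
set l := flatten _; rewrite (_ : c * _ = \prod_(y <- c :: l) y); last by rewrite big_cons.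
apply: chain_cond_iv.
- apply: chain_flatten_nseq => [y x z|y|]; [exact: dvdR_trans | exact: dvdR_refl |].
  rewrite -map_comp; split; first exact: unit_dvdR.
  by apply: (chain_iota (f := s)) => i; rewrite add1n => /dvd_s[].
move=> y; rewrite inE => /predU1P[-> | /flattenP[ys /mapP[w /mapP[i i_in ->] ->]]].
  exact: sqfR_unit.
by move=> /nseqP[-> _]; move: i_in; rewrite mem_iota add1n => /sqf_s[].
Qed.

(* Induction on the length: dividing x :: p by x leaves a chain y :: q, and x is coprime to
   last y q because last x p = last y q * x is square-free. *)
Lemma chain_sqf_factors x p : chain (@dvdR R) x p -> {in x :: p, forall y, sqfR y} ->
  exists L, [/\ pairwise_coprime fst L, {in L, forall w, sqfR w.1 /\ dvdR w.1 (last x p)}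
              & \prod_(y <- x :: p) y = \prod_(w <- L) w.1 ^+ w.2].
Proof.
have [n] := ubnP (size p); elim: n x p => // n IHn x p lt_pn chain_xp sqf_xp.
have sqf_x : sqfR x by apply/sqf_xp/mem_head.
have [q Dp] : exists q, p = [seq z * x | z <- q].
  by apply: dvdR_all_map_mulr; apply: (chain_mem _ chain_xp) => y ? z; apply: dvdR_trans.
case: q Dp => [|y q] Dp; subst p.
  exists [:: (x, 1%N)]; split=> //= [z|]; last by rewrite big_seq1 big_seq1 expr1.
  by rewrite inE => /eqP->; split=> //; apply: dvdR_refl.
have x0 := sqfR_neq0 sqf_x.
have sqf_yq : {in y :: q, forall z, sqfR z}.
  move=> z zq; apply: (@sqfR_dvd _ (z * x)); first exact: dvdR_factl.
  by apply: sqf_xp; rewrite inE; apply/orP; right; apply/mapP; exists z.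
have Dlast : last (y * x) [seq z * x | z <- q] = last y q * x.
  exact: (last_map (fun z => z * x)).
have lt_qn : (size q < n)%N by move: lt_pn; rewrite size_map.
have [L [cop_L sqf_L DL]] := IHn y q lt_qn (chain_dvdR_mul2r x0 (proj2 chain_xp)) sqf_yq.
have cop_x : rel_primeR x (last y q).
  apply/rel_primeR_sym/sqfR_mul_rel_prime; rewrite -Dlast; apply: sqf_xp.
  by rewrite inE; apply/orP; right; apply: mem_last.
exists ((x, (size q).+2) :: L); split.
- split=> // z zL; apply: rel_primeR_dvd (dvdR_refl x) (proj2 (sqf_L z zL)) cop_x.
- move=> z; rewrite inE /= Dlast => /predU1P[-> | /sqf_L[sqf_z z_last]] /=.
    by split=> //; apply: dvdR_factr.
  by split=> //; apply: dvdR_mulr.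
- rewrite big_cons big_map big_split big_const_seq count_predT iter_mulr_1 [RHS]big_cons -DL.
  by rewrite /= !exprS; ring.
Qed.

Lemma cond_iv_sqf_factorization a : cond_iv a -> sqf_factorization a.
Proof.
move=> [n [s [n1 [sqf_s [dvd_s ->]]]]]; case: n n1 sqf_s dvd_s => // n _ sqf_s dvd_s.
have [|//|L [cop_L sqf_L DL]] := @chain_sqf_factors (s 1%N) (map s (iota 2 n)).
- by apply: chain_iota => i; rewrite add1n; apply: dvd_s.
- move=> y y_in; have /mapP[i] : y \in map s (iota 1 n.+1) := y_in.
  by rewrite mem_iota add1n => /sqf_s sqf_si ->.
exists L; split=> // [w /sqf_L[] //|].
by rewrite -DL -(big_map s xpredT id) /index_iota subSS subn0.
Qed.

Section GcdConditions.
Hypothesis gcdR : gcd_domain R.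

Lemma cond_iii_sqf_factorization a : cond_iii a -> sqf_factorization a.
Proof.
move=> [n [s [k [c [n1 [sqf_s [lt_k [Uc ->]]]]]]]].
case: n n1 sqf_s lt_k => // n _ sqf_s lt_k.
apply: sqf_factorization_unit_mul => //; pose f i := (s i, k i).
suff : sqf_factorization (\prod_(y <- map f (iota 1 n.+1)) y.1 ^+ (2 ^ (y.2 - 0))).
  by rewrite big_map /index_iota subSS subn0; under eq_bigr do rewrite subn0.
apply: sqf_factorization_prod_exp2 => //.
- by apply: chain_iota => i; rewrite add1n; apply: lt_k.
- move=> y y_in; have /mapP[i] : y \in map f (iota 1 n.+1) := y_in.
  by rewrite mem_iota add1n => /sqf_s[sqf_si _] ->.
Qed.

Lemma cond_vii_v a : cond_vii a -> cond_v a.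
Proof.
move=> [n [s [k [c [n1 [sqf_s [k1 [lt_k [Uc [cop_s Da]]]]]]]]]].
pose k0 i := if i is 0 then 0%N else k i.
pose u j := \prod_(j <= i < n.+1) s i.
have k0_mono i : (i < n)%N -> (k0 i < k0 i.+1)%N.
  by case: i => [//|i] lt_in; apply: lt_k; rewrite lt_in.
have sqf_u j : (0 < j)%N -> sqfR (u j).
  move=> j1; have in_range i : i \in index_iota j n.+1 -> (0 < i <= n)%N.
    by rewrite mem_index_iota ltnS => /andP[/(leq_trans j1) -> ->].
  apply: sqfR_prod_coprime => // [|i /in_range /sqf_s[] //].
  apply: uniq_pairwise_coprime; first exact: iota_uniq.
  by move=> i i' /in_range ? /in_range ? /eqP; apply: cop_s.
have Du j : (j <= n)%N -> u j = s j * u j.+1 by move=> jn; rewrite /u big_ltn.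
have nunit_u j : (1 <= j <= n)%N -> ~~ (u j \is a GRing.unit).
  move=> jn; have [_] := sqf_s j jn; apply: contra => Uu.
  by apply: dvdR_unit Uu _; rewrite Du; [apply: dvdR_factl | case/andP: jn].
have rev_in j : (1 <= j <= n)%N -> (1 <= n.+1 - j <= n)%N by lia.
exists n, (fun j => u (n.+1 - j)%N), (fun j => k0 (n.+1 - j)%N - k0 (n.+1 - j).-1)%N, c.
split=> //; split; [|split; [|split=> //; split]].
- by move=> j /rev_in jn; split; [apply: sqf_u; case/andP: jn | apply: nunit_u].
- move=> j /rev_in; case: (n.+1 - j)%N => [//|l] /andP[_ ln].
  by rewrite subn_gt0; apply: k0_mono.
- move=> j /andP[j1 lt_jn]; rewrite subSS (subSn (ltnW lt_jn)).
  have jn : (1 <= n - j <= n)%N by lia.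
  rewrite (Du (n - j)%N) ?leq_subr //; split; first exact: dvdR_factr.
  case=> _; rewrite -[X in dvdR _ X]mul1r => /(dvdR_mul2r (sqfR_neq0 (sqf_u _ (ltn0Sn _)))).
  by move/(dvdR_unit (unitr1 _)); apply/negP; case: (sqf_s _ jn).
- rewrite Da; congr (_ * _); rewrite [RHS]big_nat_rev /=.
  rewrite [RHS](eq_big_nat _ _ (F2 := fun j => u j ^+ (k0 j - k0 j.-1))%N); last first.
    by move=> j /andP[_ lt_jn]; rewrite add1n subSS subKn // ltnW.
  rewrite prod_tails_telescope => [|j lt_jn]; last exact/ltnW/k0_mono.
  by apply: eq_big_nat => i /andP[i1 _]; case: i i1 => // i _; rewrite /= subn0.
Qed.

End GcdConditions.
End Conditions.

Unset Implicit Arguments.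

Theorem proposition1 (R : idomainType) (a : R) :
  gcd_domain R -> a != 0 -> ~~ (a \is a GRing.unit) ->
  [<-> cond_ii a; cond_iii a; cond_iv a; cond_v a; cond_vi a; cond_vii a].
Proof.
(* a != 0 is redundant: every condition makes a a product of square-free elements and a unit. *)
move=> gcdR _ nunit_a.
have W_v : sqf_factorization a -> cond_v a.
  by move/(sqf_factorization_cond_vi gcdR)/(cond_vi_vii nunit_a)/(cond_vii_v gcdR).
tfae.
- exact: cond_ii_iii.
- by move/(cond_iii_sqf_factorization gcdR)/W_v/cond_v_iv.
- by move/cond_iv_sqf_factorization/W_v.
- by move/cond_v_iv/cond_iv_sqf_factorization/(sqf_factorization_cond_vi gcdR).
- exact: cond_vi_vii.
- by move/(cond_vii_v gcdR)/cond_v_iv/cond_iv_sqf_factorization/(sqf_factorization_cond_ii gcdR).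
Qed.
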